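(* Let $G=(X,\Sigma,\longrightarrow,X_0)$ be a plant, $R_i=(Z_i,\Sigma,\longrightarrow,Z_{0i})$ ($i=1,2$) specifications with $R_1\sqsubseteq R_2$, and $S=(Y,\Sigma,\longrightarrow,Y_0)$ a $\Sigma_{uc}$-compatible supervisor with $R_1\sqsubseteq S\|G\sqsubseteq R_2$. Let $\Sigma'=\{\sigma\in\Sigma:z_1\xrightarrow{\sigma}\text{ in }R_1\text{ for some }z_1\in Z_1\}$. If there exist simulations $\Phi$ from $R_1$ to $R_2$ and $\Phi_1$ from $R_1$ to $S\|G$ such that $\Phi^{-1}$ is a simulation from $R_2$ to $R_1$ w.r.t. $\Sigma'$ and $\Phi_1^{-1}\circ\Phi$ is a simulation from $S\|G$ to $R_2$, then $S$ is $\Sigma_{uc}$-admissible w.r.t. $G$ and $S\|G\sqsubseteq_{cc}R_2$ with $\Sigma_r=\Sigma'$ (that is, $S\in\mathit{SPR}(G,R_2)$ for $\Sigma_r=\Sigma'$).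
   Context: An automaton is a 4-tuple $A=(Q,\Sigma,\longrightarrow,Q_0)$ with state set $Q$, finite event set $\Sigma$, ${\longrightarrow}\subseteq Q\times\Sigma\times Q$ and $\emptyset\neq Q_0\subseteq Q$. Write $q\xrightarrow{\sigma}q'$ for $(q,\sigma,q')\in{\longrightarrow}$, $q\xrightarrow{\sigma}$ if some such $q'$ exists; extend to strings. A state is reachable if reached from an initial state by some string. Events are partitioned into uncontrollable $\Sigma_{uc}$ and controllable $\Sigma_c$; $\Sigma_r\subseteq\Sigma$ denotes the set of required events. $S\|G=(Y\times X,\Sigma,\longrightarrow,Y_0\times X_0)$ with $(y,x)\xrightarrow{\sigma}(y',x')$ iff $y\xrightarrow{\sigma}y'$ and $x\xrightarrow{\sigma}x'$. $S$ is $\Sigma_{uc}$-compatible if $y\xrightarrow{\sigma}$ for every $y\in Y$ and $\sigma\in\Sigma_{uc}$; $S$ is $\Sigma_{uc}$-admissible w.r.t. $G$ if for every reachable $(y,x)$ of $S\|G$ and $\sigma\in\Sigma_{uc}$, $x\xrightarrow{\sigma}$ implies $(y,x)\xrightarrow{\sigma}$. For automata $A_1,A_2$ (state sets $Q_1,Q_2$, initial sets $Q_{01},Q_{02}$) and $\Sigma''\subseteq\Sigma$, $\Phi\subseteq Q_1\times Q_2$ is a simulation w.r.t. $\Sigma''$ if (initial state) every $q_0\in Q_{01}$ has $p_0\in Q_{02}$ with $(q_0,p_0)\in\Phi$ and (forward) for $(q,p)\in\Phi$, $\sigma\in\Sigma''$, $q\xrightarrow{\sigma}q'$ there is $p'$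 with $p\xrightarrow{\sigma}p'$, $(q',p')\in\Phi$; a simulation is a simulation w.r.t. $\Sigma$; a cc-simulation is a simulation that also satisfies ($\Sigma_r$-backward): for $(q,p)\in\Phi$, $\sigma\in\Sigma_r$, $p\xrightarrow{\sigma}p'$ there is $q'$ with $q\xrightarrow{\sigma}q'$, $(q',p')\in\Phi$. $A_1\sqsubseteq A_2$, $A_1\sqsubseteq_{cc}A_2$ mean such relations exist. $\Phi^{-1}=\{(p,q):(q,p)\in\Phi\}$ and $\Phi\circ\Psi=\{(a,c):\exists b\,((a,b)\in\Phi\wedge(b,c)\in\Psi)\}$. $\mathit{SPR}(G,R)$ is the set of $\Sigma_{uc}$-admissible supervisors $S$ with $S\|G\sqsubseteq_{cc}R$. *)

From mathcomp Require Import all_boot.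
Set Implicit Arguments.
Unset Strict Implicit.
Unset Printing Implicit Defensive.

Record automaton (E : Type) := Automaton {
  state : Type;
  trans : state -> E -> state -> Prop;
  init : state -> Prop;
  init_nonempty : exists q, init q
}.
Arguments trans {E} a _ _ _.
Arguments init {E} a _.

Section Defs.
Variable E : finType.

Definition enabled (A : automaton E) (q : state A) (s : E) : Prop :=
  exists q', trans A q s q'.

Inductive reachable (A : automaton E) : state A -> Prop :=
| reach_init q : init A q -> reachable q
| reach_step q s q' : reachable q -> trans A q s q' -> reachable q'.

Lemma sync_init_nonempty (S G : automaton E) :
  exists q : state S * state G, init S q.1 /\ init G q.2.
Proof.
case: (init_nonempty S) => y Hy; case: (init_nonempty G) => x Hx.
by exists (y, x).
Qed.

Definition sync (S G : automaton E) : automaton E :=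
  @Automaton E (state S * state G)
    (fun p s p' => trans S p.1 s p'.1 /\ trans G p.2 s p'.2)
    (fun p => init S p.1 /\ init G p.2)
    (sync_init_nonempty S G).

(* uc : the set Sigma_uc of uncontrollable events (controllable = complement) *)
Definition uc_compatible (uc : E -> Prop) (S : automaton E) : Prop :=
  forall (y : state S) s, uc s -> enabled y s.

Definition uc_admissible (uc : E -> Prop) (S G : automaton E) : Prop :=
  forall (q : state (sync S G)) s, reachable q -> uc s ->
    enabled (A := G) q.2 s -> enabled (A := sync S G) q s.

Definition relation_inv (Q1 Q2 : Type) (Phi : Q1 -> Q2 -> Prop) : Q2 -> Q1 -> Prop :=
  fun p q => Phi q p.

Definition relation_comp (Q1 Q2 Q3 : Type) (Phi : Q1 -> Q2 -> Prop)
  (Psi : Q2 -> Q3 -> Prop) : Q1 -> Q3 -> Prop :=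
  fun a c => exists b, Phi a b /\ Psi b c.

Definition simulation_wrt (Sig : E -> Prop) (A1 A2 : automaton E)
  (Phi : state A1 -> state A2 -> Prop) : Prop :=
  (forall q0, init A1 q0 -> exists p0, init A2 p0 /\ Phi q0 p0) /\
  (forall q p s q', Phi q p -> Sig s -> trans A1 q s q' ->
     exists p', trans A2 p s p' /\ Phi q' p').

Definition simulation (A1 A2 : automaton E) (Phi : state A1 -> state A2 -> Prop) :=
  simulation_wrt (fun _ => True) Phi.

Definition cc_simulation (Sr : E -> Prop) (A1 A2 : automaton E)
  (Phi : state A1 -> state A2 -> Prop) : Prop :=
  simulation Phi /\
  (forall q p s p', Phi q p -> Sr s -> trans A2 p s p' ->
     exists q', trans A1 q s q' /\ Phi q' p').

Definition simulated (A1 A2 : automaton E) : Prop :=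
  exists Phi : state A1 -> state A2 -> Prop, simulation Phi.

Definition cc_simulated (Sr : E -> Prop) (A1 A2 : automaton E) : Prop :=
  exists Phi : state A1 -> state A2 -> Prop, cc_simulation Sr Phi.

Definition in_SPR (uc Sr : E -> Prop) (G R S : automaton E) : Prop :=
  uc_admissible uc S G /\ cc_simulated Sr (sync S G) R.

Definition active_events (R : automaton E) : E -> Prop :=
  fun s => exists z : state R, enabled z s.

End Defs.

From mathcomp Require Import all_boot.

(* A Sigma_uc-compatible supervisor never blocks an uncontrollable event, so
   it is admissible for every plant.  For the cc-simulation take
   Psi := Phi1^-1 o Phi, already a simulation: if s in Sigma' and
   p -s-> p' in R2 with q Phi1^-1 r1 Phi p, then Phi^-1 (w.r.t. Sigma') moves
   r1 -s-> r1' with r1' Phi p', and Phi1 moves q -s-> q' with r1' Phi1 q'. *)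

Section Simulations.
Variable E : finType.

Lemma simulation_wrtS (Sig Sig' : E -> Prop) (A1 A2 : automaton E)
    (Phi : state A1 -> state A2 -> Prop) :
  (forall s, Sig' s -> Sig s) ->
  simulation_wrt Sig Phi -> simulation_wrt Sig' Phi.
Proof.
move=> subSig [Hinit Hfwd]; split=> // q p s q' Hqp /subSig.
exact: Hfwd.
Qed.

Lemma uc_compatible_admissible (uc : E -> Prop) (S G : automaton E) :
  uc_compatible uc S -> uc_admissible uc S G.
Proof.
move=> HS q s _ ucs [x' Hx].
have [y' Hy] := HS q.1 s ucs.
by exists (y', x').
Qed.

Lemma cc_simulation_comp_inv (Sr : E -> Prop) (A B C : automaton E)
    (Phi1 : state A -> state B -> Prop) (Phi : state A -> state C -> Prop) :
  simulation (relation_comp (relation_inv Phi1) Phi) ->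
  simulation_wrt Sr Phi1 ->
  simulation_wrt Sr (relation_inv Phi) ->
  cc_simulation Sr (relation_comp (relation_inv Phi1) Phi).
Proof.
move=> Hsim [_ Hfwd1] [_ HfwdInv]; split=> // q p s p' [r [Hrq Hrp]] Srs Hp.
have [r' [Hr Hr'p']] := HfwdInv p r s p' Hrp Srs Hp.
have [q' [Hq Hr'q']] := Hfwd1 r q s r' Hrq Srs Hr.
by exists q'; split=> //; exists r'.
Qed.

End Simulations.

Theorem proposition2 (E : finType) (uc : E -> Prop)
  (G R1 R2 S : automaton E) :
  simulated R1 R2 ->
  uc_compatible uc S ->
  simulated R1 (sync S G) ->
  simulated (sync S G) R2 ->
  forall (Phi : state R1 -> state R2 -> Prop)
         (Phi1 : state R1 -> state (sync S G) -> Prop),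
  simulation Phi ->
  simulation Phi1 ->
  simulation_wrt (active_events R1) (relation_inv Phi) ->
  simulation (relation_comp (relation_inv Phi1) Phi) ->
  in_SPR uc (active_events R1) G R2 S.
Proof.
move=> _ HS _ _ Phi Phi1 _ HPhi1 HPhiInv Hcomp.
split; first exact: uc_compatible_admissible.
exists (relation_comp (relation_inv Phi1) Phi).
apply: cc_simulation_comp_inv => //.
exact: simulation_wrtS HPhi1.
Qed.
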